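(* Let $X,Y,Z$ be random variables on finite alphabets $\mathcal{X},\mathcal{Y},\mathcal{Z}$ with $H(Z\mid X,Y)=0$. Define the synergistic information $\operatorname{Syn}(X,Y\to Z)=I(X;Z\mid Y)-\operatorname{Un}(X\to Z\mid Y)$ with $\operatorname{Un}$ as below. Then $\operatorname{Syn}(X,Y\to Z)\ge 0$.
   Context: For each $y\in\mathcal{Y}$ with $\Pr(Y=y)>0$, let $(A_y,B_y,C_y)$ be the random triple on $\mathcal{X}\times\mathcal{Y}\times\mathcal{Z}$ with $\Pr(A_y=x,B_y=y',C_y=z)=0$ if $\Pr(Z=z)=0$ and $\Pr(A_y=x,B_y=y',C_y=z)=\Pr(X=x,Y=y',Z=z)\Pr(Z=z\mid Y=y)/\Pr(Z=z)$ otherwise. The unique information is $\operatorname{Un}(X\to Z\mid Y)=\sum_{y:\Pr(Y=y)>0}\Pr(Y=y)\,I(A_y;C_y)$, where $I$ is (conditional) mutual information and $H$ Shannon entropy. *)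

From HB Require Import structures.
From mathcomp Require Import all_boot all_order all_algebra.
From mathcomp Require Import all_classical all_reals.
From mathcomp Require Import exp.
Set Implicit Arguments. Unset Strict Implicit. Unset Printing Implicit Defensive.
Import Order.TTheory GRing.Theory Num.Theory.
Local Open Scope ring_scope.

Section InfoDefs.
Variable R : realType.

Definition is_pmf3 (X Y Z : finType) (P : X -> Y -> Z -> R) : Prop :=
  (forall x y z, 0 <= P x y z) /\ \sum_x \sum_y \sum_z P x y z = 1.

Definition margY (X Y Z : finType) (P : X -> Y -> Z -> R) (y : Y) : R :=
  \sum_x \sum_z P x y z.
Definition margZ (X Y Z : finType) (P : X -> Y -> Z -> R) (z : Z) : R :=
  \sum_x \sum_y P x y z.
Definition margXY (X Y Z : finType) (P : X -> Y -> Z -> R) (x : X) (y : Y) : R :=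
  \sum_z P x y z.
Definition margYZ (X Y Z : finType) (P : X -> Y -> Z -> R) (y : Y) (z : Z) : R :=
  \sum_x P x y z.

Definition mutinf (A C : finType) (Q : A -> C -> R) : R :=
  \sum_a \sum_c (if 0 < Q a c then
     Q a c * ln (Q a c / ((\sum_c' Q a c') * (\sum_a' Q a' c))) else 0).

Definition condmutinf (X Y Z : finType) (P : X -> Y -> Z -> R) : R :=
  \sum_x \sum_y \sum_z (if 0 < P x y z then
     P x y z * ln (P x y z * margY P y / (margXY P x y * margYZ P y z)) else 0).

Definition condent_Z_XY (X Y Z : finType) (P : X -> Y -> Z -> R) : R :=
  - \sum_x \sum_y \sum_z (if 0 < P x y z then
     P x y z * ln (P x y z / margXY P x y) else 0).

(* The triple (A_y,B_y,C_y) of the paper. *)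
Definition tilt (X Y Z : finType) (P : X -> Y -> Z -> R) (y : Y)
  (x : X) (y' : Y) (z : Z) : R :=
  if margZ P z == 0 then 0
  else P x y' z * (margYZ P y z / margY P y) / margZ P z.

Definition unique_info (X Y Z : finType) (P : X -> Y -> Z -> R) : R :=
  \sum_(y | 0 < margY P y)
     margY P y * mutinf (fun x z => \sum_y' tilt P y x y' z).

Definition synergy (X Y Z : finType) (P : X -> Y -> Z -> R) : R :=
  condmutinf P - unique_info P.

End InfoDefs.

From HB Require Import structures.
From mathcomp Require Import all_boot all_order all_algebra.
From mathcomp Require Import all_classical all_reals.
From mathcomp Require Import exp.
Import Order.TTheory GRing.Theory Num.Theory.
Local Open Scope ring_scope.

(* If H(Z|X,Y) = 0 then Z is a function of (X,Y), so I(X;Z|Y) = H(Z|Y).  On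
   the other hand I(A_y;C_y) <= H(C_y), and C_y is distributed as Z given
   Y = y, so Un(X -> Z|Y) <= H(Z|Y) as well. *)

Lemma ler_sum_term {R : numDomainType} {I : finType} (F : I -> R) i :
  (forall j, 0 <= F j) -> F i <= \sum_j F j.
Proof. by move=> F_ge0; rewrite (bigD1 i) //= ler_wpDr // sumr_ge0. Qed.

Lemma nsumr_eq0P {R : numDomainType} {I : finType} {P : pred I} {F : I -> R} :
  (forall i, P i -> F i <= 0) -> \sum_(i | P i) F i = 0 ->
  forall i, P i -> F i = 0.
Proof.
move=> F_le0 sumF0 i Pi; apply/eqP; rewrite -oppr_eq0; apply/eqP.
apply: (@psumr_eq0P _ _ P (fun i => - F i)) => //.
  by move=> j Pj; rewrite oppr_ge0 F_le0.
by rewrite sumrN sumF0 oppr0.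
Qed.

Lemma mul_ln_div_le0 {R : realType} (a b : R) :
  0 <= a -> a <= b -> a * ln (a / b) <= 0.
Proof.
move=> a_ge0 ab; have [->|a_neq0] := eqVneq a 0; first by rewrite mul0r.
have a_gt0 : 0 < a by rewrite lt_neqAle eq_sym a_neq0.
have b_gt0 : 0 < b by apply: lt_le_trans ab.
by rewrite mulr_ge0_le0 // ln_le0 // ler_pdivrMr // mul1r.
Qed.

Definition entropy {R : realType} {C : finType} (q : C -> R) : R :=
  - \sum_c q c * ln (q c).

Lemma mutinf_le_entropy {R : realType} {A C : finType} (Q : A -> C -> R) :
  (forall a c, 0 <= Q a c) -> mutinf Q <= entropy (fun c => \sum_a Q a c).
Proof.
move=> Q_ge0.
have -> : entropy (fun c => \sum_a Q a c)
    = \sum_a \sum_c - (Q a c * ln (\sum_a' Q a' c)).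
  rewrite /entropy exchange_big /= -sumrN; apply: eq_bigr => c _.
  by rewrite mulr_suml sumrN.
apply: ler_sum => a _; apply: ler_sum => c _.
case: ifP => [Q_gt0|]; last first.
  by move/negbT; rewrite lt_def Q_ge0 andbT negbK => /eqP ->; rewrite mul0r oppr0.
have Qa_ge : Q a c <= \sum_c' Q a c' by apply: ler_sum_term.
have Qc_ge : Q a c <= \sum_a' Q a' c by apply: (ler_sum_term (fun a' => Q a' c)).
(* With marginals [q_a], [q_c]: [ln (q / (q_a q_c)) = ln (q / q_a) - ln q_c],
   and [q ln (q / q_a) <= 0]. *)
rewrite invfM mulrA ln_div ?posrE ?divr_gt0 ?(lt_le_trans Q_gt0) //.
by rewrite mulrBr lerBlDr addNr mul_ln_div_le0 // ltW.
Qed.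

Section Synergy.
Variables (R : realType) (X Y Z : finType) (P : X -> Y -> Z -> R).
Hypothesis P_ge0 : forall x y z, 0 <= P x y z.

Definition condentropy_Z_Y : R :=
  - \sum_y \sum_z margYZ P y z * ln (margYZ P y z / margY P y).

Lemma margYZ_ge0 y z : 0 <= margYZ P y z.
Proof. exact: sumr_ge0. Qed.

Lemma le_margXY x y z : P x y z <= margXY P x y.
Proof. exact: ler_sum_term. Qed.

Lemma le_margYZ x y z : P x y z <= margYZ P y z.
Proof. exact: (ler_sum_term (fun x => P x y z)). Qed.

Lemma margYZ_le_margY y z : margYZ P y z <= margY P y.
Proof.
rewrite /margY exchange_big /=.
by apply: (ler_sum_term (margYZ P y)) => z'; apply: margYZ_ge0.
Qed.

Lemma margYZ_le_margZ y z : margYZ P y z <= margZ P z.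
Proof. by apply: ler_sum => x _; apply: (ler_sum_term (fun y => P x y z)). Qed.

Lemma condent_Z_XY_eq0_determined :
  condent_Z_XY P = 0 -> forall x y z, 0 < P x y z -> P x y z = margXY P x y.
Proof.
move=> /eqP; rewrite oppr_eq0 => /eqP sum0.
pose h x y z := if 0 < P x y z then P x y z * ln (P x y z / margXY P x y) else 0.
have h_le0 x y z : h x y z <= 0.
  by rewrite /h; case: ifP => // _; rewrite mul_ln_div_le0 ?le_margXY.
have hz_le0 x y : \sum_z h x y z <= 0 by apply: sumr_le0 => z _.
have hyz_le0 x : \sum_y \sum_z h x y z <= 0 by apply: sumr_le0 => y _.
move=> x y z P_gt0.
have hx0 := nsumr_eq0P (fun x _ => hyz_le0 x) sum0 x isT.
have hxy0 := nsumr_eq0P (fun y _ => hz_le0 x y) hx0 y isT.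
have := nsumr_eq0P (fun z _ => h_le0 x y z) hxy0 z isT.
have margXY_gt0 : 0 < margXY P x y by apply: lt_le_trans (le_margXY x y z).
rewrite /h P_gt0 => /eqP; rewrite mulf_eq0 gt_eqF //= ln_eq0 ?divr_gt0 //.
by move=> /eqP /divr1_eq.
Qed.

Lemma condmutinf_determined :
  (forall x y z, 0 < P x y z -> P x y z = margXY P x y) ->
  condmutinf P = condentropy_Z_Y.
Proof.
move=> det; rewrite /condmutinf /condentropy_Z_Y.
transitivity (\sum_x \sum_y \sum_z - (P x y z * ln (margYZ P y z / margY P y))).
  apply: eq_bigr => x _; apply: eq_bigr => y _; apply: eq_bigr => z _.
  case: ifP => [P_gt0|]; last first.
    by move/negbT; rewrite lt_def P_ge0 andbT negbK => /eqP ->; rewrite mul0r oppr0.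
  have YZ_gt0 : 0 < margYZ P y z by apply: lt_le_trans (le_margYZ x y z).
  have Y_gt0 : 0 < margY P y by apply: lt_le_trans (margYZ_le_margY y z).
  rewrite -(det _ _ _ P_gt0) invfM mulrACA divff ?gt_eqF // mul1r.
  by rewrite -invf_div lnV ?posrE ?divr_gt0 // mulrN.
rewrite exchange_big -sumrN; apply: eq_bigr => y _.
rewrite -sumrN exchange_big; apply: eq_bigr => z _.
by rewrite sumrN -mulr_suml.
Qed.

Lemma tilt_ge0 y x y' z : 0 <= tilt P y x y' z.
Proof.
rewrite /tilt; case: ifP => // _.
by rewrite !(divr_ge0, mulr_ge0) ?margYZ_ge0 //; do 2 apply: sumr_ge0 => ? _.
Qed.

Lemma sum_tilt y z :
  \sum_x \sum_y' tilt P y x y' z = margYZ P y z / margY P y.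
Proof.
rewrite /tilt; have [Z0|Z_neq0] := eqVneq (margZ P z) 0.
  have -> : margYZ P y z = 0.
    by apply/eqP; rewrite eq_le margYZ_ge0 andbT -Z0 margYZ_le_margZ.
  by rewrite mul0r big1 // => x _; rewrite big1 // => y' _; rewrite Z0 eqxx.
under eq_bigr do under eq_bigr do rewrite -mulrA.
under eq_bigr do rewrite -mulr_suml.
by rewrite -mulr_suml -/(margZ P z) mulrCA divff // mulr1.
Qed.

Lemma unique_info_le_condentropy : unique_info P <= condentropy_Z_Y.
Proof.
rewrite /condentropy_Z_Y -sumrN (bigID (fun y => 0 < margY P y)) /=.
apply: ler_wpDr.
  apply: sumr_ge0 => y _; rewrite oppr_ge0; apply: sumr_le0 => z _.
  by rewrite mul_ln_div_le0 ?margYZ_ge0 ?margYZ_le_margY.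
apply: ler_sum => y Y_gt0.
have Q_ge0 x z : 0 <= \sum_y' tilt P y x y' z.
  by apply: sumr_ge0 => y' _; apply: tilt_ge0.
apply: le_trans (ler_wpM2l (ltW Y_gt0) (mutinf_le_entropy _ Q_ge0)) _.
rewrite /entropy /=; under eq_bigr do rewrite sum_tilt.
rewrite mulrN mulr_sumr lerN2; apply: ler_sum => z _.
by rewrite mulrA mulrCA divff ?gt_eqF // mulr1.
Qed.

End Synergy.

Theorem corollary4 (R : realType) (X Y Z : finType) (P : X -> Y -> Z -> R)
  (hP : is_pmf3 P) (hdet : condent_Z_XY P = 0) :
  0 <= synergy P.
Proof.
have [P_ge0 _] := hP.
rewrite /synergy subr_ge0 condmutinf_determined //.
  exact: unique_info_le_condentropy.
exact: condent_Z_XY_eq0_determined.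
Qed.
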